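(* Let $L$ be a modular link with labelled code words $w_1,\dots,w_c$ as in the context, with total period $\overline{n}$, embedded in the Lorenz template. For each $i\in\{1,\dots,\overline{n}\}$ let $s_i$ be the infinite sequence of integers \[ s_i=(l_i,\,-k_{i+1},\,l_{i+1},\,-k_{i+2},\,l_{i+2},\,\dots), \] with indices taken cyclically within the word containing $x_i$. Then the order within the full $x$-bunch, i.e. the left-to-right order of the $\overline{n}$ $x$-turns $(x_i,k_i)$, $i=1,\dots,\overline{n}$, in the split template, is obtained by ordering the labelled bases $x_1,\dots,x_{\overline{n}}$ so that $x_i$ lies to the left of $x_j$ whenever $s_i$ is lexicographically smaller than $s_j$ (in particular, if $l_1,\dots,l_{\overline{n}}$ are pairwise distinct, the order within the full $x$-bunch is the order of the $x_i$ by increasing $l_i$; and if $\overline{n}=1$ it is $(x_1)$). Symmetrically, the order within the full $y$-bunch is obtained by ordering the labelled $y$-bases $y_i$ according to the lexicographic order of the sequences $(-k_{i+1},\,l_{i+1},\,-k_{i+2},\,l_{i+2},\dots)$, i.e. primarily by descending order of the following $x$-exponent, then ascending order of the next $y$-exponent, and so on.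
   Context: A modular link $L$ with $c$ components is given by distinct cyclic permutation classes of positive aperiodic words, written with labelled bases as $w_r=x_{\Sigma(r)+1}^{k_{\Sigma(r)+1}}y_{\Sigma(r)+1}^{l_{\Sigma(r)+1}}\cdots x_{\Sigma(r)+n_r}^{k_{\Sigma(r)+n_r}}y_{\Sigma(r)+n_r}^{l_{\Sigma(r)+n_r}}$, where $\Sigma(r)=\sum_{q<r}n_q$, all exponents are positive integers, and $\overline{n}=\sum_r n_r$. Subscripts of bases and exponents of $w_r$ are read cyclically in $\{\Sigma(r)+1,\dots,\Sigma(r)+n_r\}$. The link is embedded in the Lorenz template; cutting along the branch line gives the split template with an $x$-split line (left ear) and $y$-split line (right ear) on top and the branch line at the bottom, with a marked point $0$ on the branch line between the two ears. Each letter of a word corresponds to a strand (''turn''): an $x$-turn is the overcrossing strand through the left ear corresponding to an $x$-letter, a $y$-turn the undercrossing strand through the right ear corresponding to a $y$-letter. The $(x_i,j)$-turn is the turn of the $j$-th letter of the block $x_i^{k_i}$. The full $x$-bunch is the ordered $\overline{n}$-tuple of the $\overline{n}$ rightmost $x$-turns in the template, namely the $x$-turns that start left of $0$ and end right of $0$ on the branch line; these are exactly the turns $(x_i,k_i)$, $i=1,\dots,\overline{n}$. The order within the full $x$-bunch is the tuple of their labelled bases read from left to right in the split template. The full $y$-bunch and its order are defined analogously with the $\overline{n}$ leftmost $y$-turns $(y_i,l_i)$. *)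

From mathcomp Require Import all_boot all_order all_algebra.
Set Implicit Arguments. Unset Strict Implicit. Unset Printing Implicit Defensive.
Import Order.TTheory GRing.Theory Num.Theory.

(* A code word is a cyclic list of blocks (k, l) standing for x^k y^l.
   A link is a list of code words, one per component.
   The labelled base x_{Sigma(r)+p+1} (resp. y_...) of the paper corresponds
   to the pair (r, p): component r, block p (0-based). *)
Definition block := (nat * nat)%type.
Definition code_word := seq block.

(* letters: false = x, true = y *)
Definition word_letters (w : code_word) : seq bool :=
  flatten [seq nseq b.1 false ++ nseq b.2 true | b <- w].

(* w_r are positive, aperiodic, and lie in pairwise distinct cyclic classes *)
Definition modular_link (ws : seq code_word) : Prop :=
  [/\ forall r, r < size ws -> 0 < size (nth [::] ws r),
      forall r b, r < size ws -> b \in nth [::] ws r -> 0 < b.1 /\ 0 < b.2,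
      forall r t, r < size ws -> 0 < t < size (word_letters (nth [::] ws r)) ->
        rot t (word_letters (nth [::] ws r)) <> word_letters (nth [::] ws r)
    & forall r r' t, r < size ws -> r' < size ws -> r <> r' ->
        rot t (word_letters (nth [::] ws r)) <> word_letters (nth [::] ws r')].

(* position (0-based) of the first letter of block p in the letter word *)
Definition blk_start (w : code_word) (p : nat) : nat :=
  sumn [seq b.1 + b.2 | b <- take p w].

(* position of the letter of the (x_p, k_p)-turn and of the (y_p, l_p)-turn *)
Definition x_turn_pos (w : code_word) (p : nat) : nat :=
  blk_start w p + (nth (0, 0) w p).1 - 1.
Definition y_turn_pos (w : code_word) (p : nat) : nat :=
  blk_start w p + (nth (0, 0) w p).1 + (nth (0, 0) w p).2 - 1.

(* itinerary (symbolic coordinate on the branch line) of the point of the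
   periodic orbit of w at letter position q: the infinite periodic word
   read cyclically from q *)
Definition itin (w : code_word) (q : nat) : nat -> bool :=
  fun n => nth false (word_letters w) ((q + n) %% size (word_letters w)).

Definition lexlt (T : Type) (lt : T -> T -> Prop) (a b : nat -> T) : Prop :=
  exists n, (forall m, m < n -> a m = b m) /\ lt (a n) (b n).

(* left-to-right order of points on the branch line of the Lorenz template:
   lexicographic order of itineraries with x < y *)
Definition branch_lt : (nat -> bool) -> (nat -> bool) -> Prop :=
  lexlt (fun a b : bool => a = false /\ b = true).

(* turn (x_p, k_p) of component r lies left of turn (x_p', k_p') of r'
   in the split template (compared by their starting points on the
   branch line) *)
Definition x_turn_left (ws : seq code_word) (r p r' p' : nat) : Prop :=
  branch_lt (itin (nth [::] ws r) (x_turn_pos (nth [::] ws r) p))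
            (itin (nth [::] ws r') (x_turn_pos (nth [::] ws r') p')).
Definition y_turn_left (ws : seq code_word) (r p r' p' : nat) : Prop :=
  branch_lt (itin (nth [::] ws r) (y_turn_pos (nth [::] ws r) p))
            (itin (nth [::] ws r') (y_turn_pos (nth [::] ws r') p')).

Definition kexp (w : code_word) (i : nat) : int := Posz (nth (0, 0) w (i %% size w)).1.
Definition lexp (w : code_word) (i : nat) : int := Posz (nth (0, 0) w (i %% size w)).2.

Definition s_seq (ws : seq code_word) (r p : nat) : nat -> int :=
  fun n => let w := nth [::] ws r in
    if odd n then (- kexp w (p + n./2 + 1))%R else lexp w (p + n./2).
Definition t_seq (ws : seq code_word) (r p : nat) : nat -> int :=
  fun n => let w := nth [::] ws r in
    if odd n then lexp w (p + n./2 + 1) else (- kexp w (p + n./2 + 1))%R.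

Definition int_lt (a b : int) : Prop := (a < b)%R.

From mathcomp Require Import all_boot all_order all_algebra.
From mathcomp Require Import zify.
From Stdlib Require Import Classical.
Set Implicit Arguments. Unset Strict Implicit. Unset Printing Implicit Defensive.
Import Order.TTheory GRing.Theory Num.Theory.

(* The point of the orbit of a word w at a letter position has as itinerary
   the periodic letter word of w read from that position, and points on the
   branch line are ordered lexicographically with x < y.  The proof rests on
   one combinatorial fact about run-length encodings: if two infinite binary
   words start with the same letter and are decoded from positive run lengths,
   their lexicographic order is the lexicographic order of the run lengths
   with signs, x-runs counted negatively and y-runs positively
   (decode_lt_iff).  It then remains to compute the runs seen from a turn:
   from the (x_p, k_p)-turn one reads x^1 y^(l_p) x^(k_(p+1)) ..., and from
   the (y_p, l_p)-turn y^1 x^(k_(p+1)) y^(l_(p+1)) ...  Dropping the common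
   first run of length 1, the signed run sequences are exactly s_p and t_p. *)

(* Run-length decoding: decode b e is the infinite binary word
   b^(e 0) (~~b)^(e 1) b^(e 2) ... ; the fuel only bounds the number of
   runs skipped and is irrelevant as soon as it exceeds the position. *)
Fixpoint decode_fuel (fuel : nat) (b : bool) (e : nat -> nat) (n : nat) : bool :=
  match fuel with
  | 0 => b
  | f.+1 => if n < e 0 then b else decode_fuel f (~~ b) (fun i => e i.+1) (n - e 0)
  end.

Definition decode (b : bool) (e : nat -> nat) (n : nat) : bool := decode_fuel n.+1 b e n.

Definition positive_runs (e : nat -> nat) : Prop := forall j, 0 < e j.

Lemma decode_fuel_ext f b e e' n :
  (forall j, e j = e' j) -> decode_fuel f b e n = decode_fuel f b e' n.
Proof.
elim: f b e e' n => [|f IH] b e e' n Ee //=.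
by rewrite Ee; case: ifP => // _; apply: IH => j; rewrite Ee.
Qed.

Lemma decode_ext b e e' n : (forall j, e j = e' j) -> decode b e n = decode b e' n.
Proof. exact: decode_fuel_ext. Qed.

(* With positive runs, at most n runs are skipped before position n. *)
Lemma decode_fuel_enough f f' b e n : positive_runs e -> n < f -> n < f' ->
  decode_fuel f b e n = decode_fuel f' b e n.
Proof.
elim: f f' b e n => [|f IH] [|f'] b e n e_pos //= ltnf ltnf'.
have e0_pos := e_pos 0.
case: ifP => // /negbT; rewrite -leqNgt => le_e0n.
by apply: IH; [move=> j; apply: e_pos | lia | lia].
Qed.

Lemma decode_cons b e n : positive_runs e ->
  decode b e n = if n < e 0 then b else decode (~~ b) (fun i => e i.+1) (n - e 0).
Proof.
move=> e_pos; rewrite {1}/decode /=; case: ifP => // /negbT; rewrite -leqNgt => le_e0n.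
have e0_pos := e_pos 0.
by apply: decode_fuel_enough; [move=> j; apply: e_pos | lia | lia].
Qed.

Lemma decode_drop b e t n : positive_runs e -> t < e 0 ->
  decode b e (t + n) = decode b (fun j => if j == 0 then e 0 - t else e j) n.
Proof.
move=> e_pos lt_t_e0; rewrite decode_cons // [RHS]decode_cons /=; last first.
  by case=> [|j] /=; [rewrite subn_gt0 | apply: e_pos].
have -> : (t + n < e 0) = (n < e 0 - t) by apply/idP/idP; lia.
by case: ifP => // _; have -> : t + n - e 0 = n - (e 0 - t) by lia.
Qed.

Definition signed_runs (b : bool) (e : nat -> nat) (j : nat) : int :=
  if b (+) odd j then Posz (e j) else (- Posz (e j))%R.

(* The sign pattern is fixed by b and the parity of j, so it can be cancelled. *)
Lemma signed_runs_inj b e e' j : signed_runs b e j = signed_runs b e' j -> e j = e' j.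
Proof. by rewrite /signed_runs; case: ifP => _ => [[]|/oppr_inj[]]. Qed.

Lemma signed_runsS b e j :
  signed_runs b e j.+1 = signed_runs (~~ b) (fun i => e i.+1) j.
Proof. by rewrite /signed_runs /= addNb addbN. Qed.

Section FirstRun.

Variables (b : bool) (e : nat -> nat).
Hypothesis e_pos : positive_runs e.

Lemma decode_first_run n : n < e 0 -> decode b e n = b.
Proof. by move=> lt_n_e0; rewrite decode_cons // lt_n_e0. Qed.

Lemma decode_after_first_run n :
  decode b e (e 0 + n) = decode (~~ b) (fun i => e i.+1) n.
Proof. by rewrite decode_cons // ltnNge leq_addr /= addKn. Qed.

Lemma decode_end_first_run : decode b e (e 0) = ~~ b.
Proof.
rewrite -[e 0]addn0 decode_after_first_run decode_cons; last by move=> j; apply: e_pos.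
by have := e_pos 1; case: (e 1).
Qed.

End FirstRun.

Section DecodeOrder.

Variables (b : bool) (e e' : nat -> nat).
Hypotheses (e_pos : positive_runs e) (e'_pos : positive_runs e').

(* Words whose first runs have different lengths are ordered by the sign
   convention of signed_runs: a longer first x-run, or a shorter first y-run,
   goes to the left. *)
Lemma decode_lt_first_run :
  int_lt (signed_runs b e 0) (signed_runs b e' 0) -> branch_lt (decode b e) (decode b e').
Proof.
rewrite /int_lt /signed_runs addbF; case: b.
- rewrite ltz_nat => lt_e0; exists (e 0); split.
    by move=> m lt_m; rewrite !decode_first_run //; lia.
  by rewrite decode_end_first_run // decode_first_run.
- rewrite ltrN2 ltz_nat => lt_e'0; exists (e' 0); split.
    by move=> m lt_m; rewrite !decode_first_run //; lia.
  by rewrite decode_end_first_run // decode_first_run.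
Qed.

Lemma decode_lt_tail : e 0 = e' 0 ->
  branch_lt (decode (~~ b) (fun i => e i.+1)) (decode (~~ b) (fun i => e' i.+1)) ->
  branch_lt (decode b e) (decode b e').
Proof.
move=> eq_e0 [n [eq_prefix lt_n]]; exists (e 0 + n); split.
  move=> m lt_m; have [lt_m_e0|le_e0_m] := ltnP m (e 0).
    by rewrite !decode_first_run // -eq_e0.
  rewrite -(subnKC le_e0_m) decode_after_first_run // {2}eq_e0.
  by rewrite decode_after_first_run //; apply: eq_prefix; lia.
by rewrite decode_after_first_run // eq_e0 decode_after_first_run.
Qed.

End DecodeOrder.

Lemma decode_lt b e e' : positive_runs e -> positive_runs e' ->
  lexlt int_lt (signed_runs b e) (signed_runs b e') -> branch_lt (decode b e) (decode b e').
Proof.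
move=> + + [n []]; elim: n b e e' => [|n IH] b e e' e_pos e'_pos eq_prefix lt_n.
  exact: decode_lt_first_run.
apply: decode_lt_tail => //; first exact: signed_runs_inj (eq_prefix 0 _).
apply: IH; [by move=> j; apply: e_pos | by move=> j; apply: e'_pos | | ].
- by move=> m lt_mn; rewrite -!signed_runsS; apply: eq_prefix.
- by rewrite -!signed_runsS.
Qed.

Lemma lexlt_ext T (lt : T -> T -> Prop) a b a' b' :
  (forall n, a n = a' n) -> (forall n, b n = b' n) ->
  lexlt lt a b <-> lexlt lt a' b'.
Proof.
move=> eq_a eq_b; split=> -[n [eq_prefix lt_n]]; exists n; split.
- by move=> m lt_m; rewrite -eq_a -eq_b; apply: eq_prefix.
- by rewrite -eq_a -eq_b.
- by move=> m lt_m; rewrite eq_a eq_b; apply: eq_prefix.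
- by rewrite eq_a eq_b.
Qed.

Lemma lexlt_tail T (lt : T -> T -> Prop) a b :
  (forall x, ~ lt x x) -> a 0 = b 0 ->
  lexlt lt a b <-> lexlt lt (fun n => a n.+1) (fun n => b n.+1).
Proof.
move=> lt_irr eq_0; split.
- move=> [[|n] [eq_prefix lt_n]]; first by rewrite eq_0 in lt_n; case: (lt_irr _ lt_n).
  by exists n; split=> // m lt_m; apply: eq_prefix.
- move=> [n [eq_prefix lt_n]]; exists n.+1; split=> // -[|m] lt_m //.
  exact: eq_prefix.
Qed.

Lemma lexlt_trichotomy (d : Order.disp_t) (T : orderType d) (a b : nat -> T) :
  (forall n, a n = b n) \/
  lexlt (fun x y => (x < y)%O) a b \/ lexlt (fun x y => (x < y)%O) b a.
Proof.
have [ex_neq|all_eq] := classic (exists n, a n != b n); last first.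
  by left=> n; apply/eqP; apply: NNPP => neq_n; apply: all_eq; exists n; apply/negP.
have [n neq_n min_n] := ex_minnP ex_neq.
have eq_prefix m : m < n -> a m = b m.
  by move=> lt_mn; apply/eqP; apply: contraTT lt_mn => /min_n; rewrite -leqNgt.
right; case: (ltgtP (a n) (b n)) => [lt_ab|lt_ba|eq_ab].
- by left; exists n.
- by right; exists n; split=> // m /eq_prefix.
- by rewrite eq_ab eqxx in neq_n.
Qed.

Lemma branch_lt_asym f g : branch_lt f g -> ~ branch_lt g f.
Proof.
move=> [n [eq_n [fn gn]]] [m [eq_m [gm fm]]].
case: (ltngtP n m) => [/eq_m|/eq_n|eq_nm]; first [congruence | by subst m; congruence].
Qed.

Lemma branch_lt_irrefl f g : (forall n, f n = g n) -> ~ branch_lt f g.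
Proof. by move=> eq_fg [n [_ []]]; rewrite eq_fg => ->. Qed.

Lemma decode_lt_iff b e e' : positive_runs e -> positive_runs e' ->
  branch_lt (decode b e) (decode b e') <->
  lexlt int_lt (signed_runs b e) (signed_runs b e').
Proof.
move=> e_pos e'_pos; split; last exact: decode_lt.
move=> lt_dec; case: (lexlt_trichotomy (signed_runs b e) (signed_runs b e')) => [eq_s|[//|gt_s]].
- exfalso; apply: (branch_lt_irrefl _ lt_dec) => n; apply: decode_ext => j.
  exact: signed_runs_inj (eq_s j).
- by case: (branch_lt_asym lt_dec (decode_lt e'_pos e_pos gt_s)).
Qed.

Definition cyc_block (w : code_word) (i : nat) : block := nth (0, 0) w (i %% size w).

Definition block_runs (w : code_word) (q j : nat) : nat :=
  if odd j then (cyc_block w (q + j./2)).2 else (cyc_block w (q + j./2)).1.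

Lemma size_word_letters (w : code_word) :
  size (word_letters w) = sumn [seq b.1 + b.2 | b <- w].
Proof.
elim: w => //= b w IH; rewrite /word_letters /= size_cat size_cat !size_nseq.
by rewrite -/(word_letters w) IH.
Qed.

Lemma block_start0 (w : code_word) : blk_start w 0 = 0.
Proof. by rewrite /blk_start take0. Qed.

Lemma block_start_size (w : code_word) : blk_start w (size w) = size (word_letters w).
Proof. by rewrite /blk_start take_size size_word_letters. Qed.

Lemma block_start_le (w : code_word) q : blk_start w q <= size (word_letters w).
Proof.
rewrite size_word_letters; elim: w q => [|b w IH] [|q] //=.
by rewrite /blk_start /= leq_add2l; apply: IH.
Qed.

Lemma block_startS (w : code_word) q : q < size w ->
  blk_start w q.+1 = blk_start w q + (nth (0, 0) w q).1 + (nth (0, 0) w q).2.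
Proof.
elim: w q => [|b w IH] [|q] //= lt_q; first by rewrite /blk_start /= take0 addn0.
by move: (IH q lt_q); rewrite /blk_start /= => ->; rewrite !addnA.
Qed.

Lemma nth_block (w : code_word) q j : q < size w ->
  j < (nth (0, 0) w q).1 + (nth (0, 0) w q).2 ->
  nth false (word_letters w) (blk_start w q + j) =
  nth false (nseq (nth (0, 0) w q).1 false ++ nseq (nth (0, 0) w q).2 true) j.
Proof.
elim: w q => [|b w IH] [|q] //= lt_q lt_j; rewrite /blk_start /= /word_letters /=.
  by rewrite nth_cat size_cat !size_nseq lt_j.
rewrite -/(word_letters w) nth_cat size_cat !size_nseq.
by rewrite -/(blk_start w q) ltnNge -addnA leq_addr /= addKn; apply: IH.
Qed.

Lemma itin_shift (w : code_word) s t n : itin w s (t + n) = itin w (s + t) n.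
Proof. by rewrite /itin addnA. Qed.

(* Runs seen from the (x_p, k_p)-turn: x^1 y^(l_p) x^(k_(p+1)) y^(l_(p+1)) ...
   and from the (y_p, l_p)-turn: y^1 x^(k_(p+1)) y^(l_(p+1)) ... *)
Definition x_turn_runs (w : code_word) (p j : nat) : nat :=
  if j == 0 then 1 else block_runs w p j.
Definition y_turn_runs (w : code_word) (p j : nat) : nat :=
  if j == 0 then 1 else block_runs w p j.+1.

Section PositiveWord.

Variable w : code_word.
Hypothesis w_pos : forall b, b \in w -> 0 < b.1 /\ 0 < b.2.
Hypothesis w_nonempty : 0 < size w.

Lemma block_runs_pos q : positive_runs (block_runs w q).
Proof.
move=> j; have [] := w_pos (mem_nth (0, 0) (ltn_pmod (q + j./2) w_nonempty)).
by rewrite /block_runs /cyc_block; case: odd.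
Qed.

Lemma block_runs0 q : q < size w -> block_runs w q 0 = (nth (0, 0) w q).1.
Proof. by move=> lt_q; rewrite /block_runs /cyc_block /= addn0 modn_small. Qed.

Lemma block_runs1 q : q < size w -> block_runs w q 1 = (nth (0, 0) w q).2.
Proof. by move=> lt_q; rewrite /block_runs /cyc_block /= addn0 modn_small. Qed.

Lemma block_runsSS q j : block_runs w q j.+2 = block_runs w (q.+1 %% size w) j.
Proof. by rewrite /block_runs /cyc_block /= negbK modnDml addSn addnS. Qed.

Lemma itin_in_block q n : q < size w ->
  n < (nth (0, 0) w q).1 + (nth (0, 0) w q).2 ->
  itin w (blk_start w q) n =
  nth false (nseq (nth (0, 0) w q).1 false ++ nseq (nth (0, 0) w q).2 true) n.
Proof.
move=> lt_q lt_n; rewrite /itin modn_small; first exact: nth_block.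
by move: (block_start_le w q.+1); rewrite block_startS //; lia.
Qed.

Lemma itin_next_block q n : q < size w ->
  itin w (blk_start w q + ((nth (0, 0) w q).1 + (nth (0, 0) w q).2)) n =
  itin w (blk_start w (q.+1 %% size w)) n.
Proof.
move=> lt_q; rewrite addnA -block_startS //.
have [lt_q1|] := ltnP q.+1 (size w); first by rewrite modn_small.
move=> le_size; have -> : q.+1 = size w by lia.
by rewrite modnn block_start_size block_start0 /itin modnDl.
Qed.

Lemma itin_block_start n q : q < size w ->
  itin w (blk_start w q) n = decode false (block_runs w q) n.
Proof.
elim/ltn_ind: n q => n IH q lt_q.
set k := (nth (0, 0) w q).1; set l := (nth (0, 0) w q).2.
have k_pos : 0 < k by rewrite /k -(block_runs0 lt_q); apply: block_runs_pos.
have l_pos : 0 < l by rewrite /l -(block_runs1 lt_q); apply: block_runs_pos.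
rewrite (decode_cons _ _ (block_runs_pos q)) block_runs0 //.
rewrite (decode_cons _ _ (fun j => block_runs_pos q j.+1)) block_runs1 //= -/k -/l.
have [lt_nk|le_kn] := ltnP n k.
  rewrite itin_in_block //; last by rewrite -/k -/l; lia.
  by rewrite -/k -/l nth_cat size_nseq lt_nk nth_nseq lt_nk.
have [lt_nl|le_ln] := ltnP (n - k) l.
  rewrite itin_in_block //; last by rewrite -/k -/l; lia.
  by rewrite -/k -/l nth_cat size_nseq ltnNge le_kn /= nth_nseq lt_nl.
rewrite (@decode_ext _ _ (block_runs w (q.+1 %% size w))); last by move=> j; rewrite block_runsSS.
rewrite -IH ?ltn_pmod //; last by lia.
rewrite {1}(_ : n = k + l + (n - k - l)); last by lia.
by rewrite itin_shift itin_next_block.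
Qed.

Lemma x_turn_runs_pos p : positive_runs (x_turn_runs w p).
Proof. by case=> [|j] //; apply: block_runs_pos. Qed.

Lemma y_turn_runs_pos p : positive_runs (y_turn_runs w p).
Proof. by case=> [|j] //; apply: block_runs_pos. Qed.

(* The (x_p, k_p)-turn is the last letter of the x-run of block p. *)
Lemma itin_x_turn p : p < size w -> forall n,
  itin w (x_turn_pos w p) n = decode false (x_turn_runs w p) n.
Proof.
move=> lt_p n; set k := (nth (0, 0) w p).1.
have k_pos : 0 < k by rewrite /k -(block_runs0 lt_p); apply: block_runs_pos.
rewrite /x_turn_pos -/k (_ : _ + k - 1 = blk_start w p + (k - 1)); last by lia.
rewrite -itin_shift itin_block_start // decode_drop; last 2 first.
- exact: block_runs_pos.
- by rewrite block_runs0 // -/k; lia.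
by apply: decode_ext => -[|j] //=; rewrite block_runs0 // -/k /x_turn_runs /=; lia.
Qed.

(* The (y_p, l_p)-turn is the last letter of block p. *)
Lemma itin_y_turn p : p < size w -> forall n,
  itin w (y_turn_pos w p) n = decode true (y_turn_runs w p) n.
Proof.
move=> lt_p n; set k := (nth (0, 0) w p).1; set l := (nth (0, 0) w p).2.
have l_pos : 0 < l by rewrite /l -(block_runs1 lt_p); apply: block_runs_pos.
rewrite /y_turn_pos -/k -/l (_ : _ + k + l - 1 = blk_start w p + (k + (l - 1))); last by lia.
rewrite -itin_shift itin_block_start // -addnA -[k]block_runs0 //.
rewrite (decode_after_first_run _ (block_runs_pos p)) /= decode_drop; last 2 first.
- by move=> j; apply: block_runs_pos.
- by rewrite block_runs1 // -/l; lia.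
by apply: decode_ext => -[|j] //=; rewrite block_runs1 // -/l /y_turn_runs /=; lia.
Qed.

End PositiveWord.

Lemma s_seq_signed_runs ws r p n :
  s_seq ws r p n = signed_runs false (x_turn_runs (nth [::] ws r) p) n.+1.
Proof.
rewrite /s_seq /signed_runs /x_turn_runs /block_runs /kexp /lexp /= uphalf_half.
by case: (odd n) => /=; rewrite ?add0n // (addnC 1) addnA.
Qed.

Lemma t_seq_signed_runs ws r p n :
  t_seq ws r p n = signed_runs true (y_turn_runs (nth [::] ws r) p) n.+1.
Proof.
rewrite /t_seq /signed_runs /y_turn_runs /block_runs /kexp /lexp /=.
by case: (odd n) => /=; rewrite addn1 addnS.
Qed.

Theorem mainTheorem4 (ws : seq code_word) :
  modular_link ws ->
  forall r p r' p',
    r < size ws -> p < size (nth [::] ws r) ->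
    r' < size ws -> p' < size (nth [::] ws r') ->
    (x_turn_left ws r p r' p' <-> lexlt int_lt (s_seq ws r p) (s_seq ws r' p')) /\
    (y_turn_left ws r p r' p' <-> lexlt int_lt (t_seq ws r p) (t_seq ws r' p')).
Proof.
move=> [nonempty exps_pos _ _] r p r' p' lt_r lt_p lt_r' lt_p'.
have w_pos := exps_pos r _ lt_r; have w_ne := nonempty r lt_r.
have w'_pos := exps_pos r' _ lt_r'; have w'_ne := nonempty r' lt_r'.
have int_lt_irr (x : int) : ~ int_lt x x by rewrite /int_lt ltxx.
split.
- apply: iff_trans (lexlt_ext _ (itin_x_turn w_pos w_ne lt_p) (itin_x_turn w'_pos w'_ne lt_p')) _.
  apply: iff_trans (decode_lt_iff _ (x_turn_runs_pos w_pos w_ne p) (x_turn_runs_pos w'_pos w'_ne p')) _.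
  rewrite lexlt_tail //.
  by apply: lexlt_ext => n; rewrite s_seq_signed_runs.
- apply: iff_trans (lexlt_ext _ (itin_y_turn w_pos w_ne lt_p) (itin_y_turn w'_pos w'_ne lt_p')) _.
  apply: iff_trans (decode_lt_iff _ (y_turn_runs_pos w_pos w_ne p) (y_turn_runs_pos w'_pos w'_ne p')) _.
  rewrite lexlt_tail //.
  by apply: lexlt_ext => n; rewrite t_seq_signed_runs.
Qed.
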